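(* For $n\ge 0$, the $(n+1)\times(n+1)$ Hankel matrix $M_n=\left[\binom{i+j}{n}\right]_{0\le i,j\le n}$ is invertible, with inverse $$M_n^{-1}=\left[(-1)^{n-i-j}\binom{n+1}{i+j+1}\right]_{0\le i,j\le n}.$$
   Context: Binomial coefficients $\binom{a}{b}$ with integers $a\ge0$ are taken to be $0$ when $b>a$ or $b<0$. *)

From HB Require Import structures.
From mathcomp Require Import all_boot all_order all_algebra.
Set Implicit Arguments. Unset Strict Implicit. Unset Printing Implicit Defensive.
Import GRing.Theory Num.Theory.
Local Open Scope ring_scope.

Definition hankelM (n : nat) : 'M[int]_n.+1 :=
  \matrix_(i < n.+1, j < n.+1) ('C(i + j, n))%:Z.

(* claimed inverse: [(-1)^(n-i-j) C(n+1, i+j+1)]; since (-1)^(n-i-j) = (-1)^(n+i+j)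
   for integer exponents, we use the nat exponent n+i+j *)
Definition hankelMinv (n : nat) : 'M[int]_n.+1 :=
  \matrix_(i < n.+1, j < n.+1) ((-1) ^+ (n + i + j) * ('C(n.+1, i + j + 1))%:Z).

From HB Require Import structures.
From mathcomp Require Import all_boot all_order all_algebra.
From mathcomp Require Import ring zify.
Import GRing.Theory Num.Theory.
Local Open Scope ring_scope.

(* It suffices to show M_n * M_n' = 1, where M_n' = hankelMinv n is the claimed
   inverse; over a commutative ring a one-sided inverse is the inverse.  Entry
   (i, j) of the product is  P(i,j) = sum_k C(i+k,n) (-1)^(n+k+j) C(n+1,k+j+1).
   - For i <= j the factors C(i+k,n) and C(n+1,k+j+1) are both nonzero only at
     k = n - j, where the term is (-1)^(2n) C(i+n-j, n) = [i = j].
   - For j < i the substitution m = k+j+1 turns P(i,j) into +/- the alternating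
     sum  D_{n+1}(i-j-1) = sum_m (-1)^m C(n+1,m) C(i-j-1+m, n),  an (n+1)-st
     finite difference of the degree-n polynomial x |-> C(x, n); hence it is 0.
   The finite-difference fact is proved in closed form, D_N(a) = (-1)^N C(a,n-N)
   for N <= n and 0 otherwise, by induction on N using Pascal's rule. *)

Lemma sign_add_double (R : pzRingType) (a b c : nat) :
  (a + c.*2 = b)%N -> (-1) ^+ a = (-1) ^+ b :> R.
Proof. by move=> <-; rewrite exprD -muln2 exprM sqrr_sign mulr1. Qed.

Definition binom_diff (N a n : nat) : int :=
  \sum_(m < N.+1) (-1) ^+ m * ('C(N, m) * 'C(a + m, n))%:Z.

(* Pascal's rule for C(N+1, m) gives D_{N+1}(a) = D_N(a) - D_N(a+1). *)
Lemma binom_diffS N a n : binom_diff N.+1 a n = binom_diff N a n - binom_diff N a.+1 n.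
Proof.
rewrite /binom_diff big_ord_recl /=.
under eq_bigr => i _ do rewrite /bump /= add1n binS mulnDl PoszD mulrDr.
rewrite big_split /= addrA.
have shift_first :
   \sum_(m < N.+1) (-1) ^+ m * ('C(N, m) * 'C(a + m, n))%:Z =
   (-1) ^+ 0 * ('C(N.+1, 0) * 'C(a + 0, n))%:Z +
   \sum_(i < N.+1) (-1) ^+ i.+1 * ('C(N, i.+1) * 'C(a + i.+1, n))%:Z.
  rewrite big_ord_recl /= !bin0.
  rewrite [in RHS]big_ord_recr /= (bin_small (ltnSn N)) mul0n mulr0 addr0.
  by congr (_ + _).
rewrite -shift_first; congr (_ + _).
rewrite -sumrN; apply: eq_bigr => i _.
by rewrite exprS mulN1r mulNr addnS addSn.
Qed.

Lemma binom_diffE N a n :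
  binom_diff N a n = (-1) ^+ N * (if (N <= n)%N then 'C(a, n - N) else 0)%:Z.
Proof.
elim: N a => [|N IH] a.
  by rewrite /binom_diff big_ord1 /= subn0 bin0 mul1n addn0 expr0 !mul1r.
rewrite binom_diffS !IH.
case: (ltngtP N n) => [lt_Nn | lt_nN | ->].
- rewrite -(subnSK lt_Nn) binS PoszD exprS; ring.
- ring.
- rewrite subnn !bin0; ring.
Qed.

Lemma binom_diff_vanish N a n : (n < N)%N -> binom_diff N a n = 0.
Proof. by move=> lt_nN; rewrite binom_diffE leqNgt lt_nN mulr0. Qed.

Definition hankel_prod (n i j : nat) : int :=
  \sum_(k < n.+1) ('C(i + k, n))%:Z * ((-1) ^+ (n + k + j) * ('C(n.+1, k + j + 1))%:Z).

Lemma hankel_prodE n (i j : 'I_n.+1) :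
  (hankelM n *m hankelMinv n) i j = hankel_prod n i j.
Proof. by rewrite !mxE; apply: eq_bigr => k _; rewrite !mxE. Qed.

(* Below the diagonal the entry is, up to sign, an (n+1)-st difference: the
   terms of P(i,j) vanish for k >= n+1-j, those of D_{n+1}(i-j-1) for m <= j,
   and the remaining windows correspond under m = k + j + 1. *)
Lemma hankel_prod_lower n i j :
  (i <= n)%N -> (j < i)%N -> hankel_prod n i j = 0.
Proof.
move=> le_in lt_ji.
pose term k := ('C(i + k, n))%:Z * ((-1) ^+ (n + k + j) * ('C(n.+1, k + j + 1))%:Z).
have prod_window : hankel_prod n i j = \sum_(0 <= k < n.+1 - j) term k.
  rewrite /hankel_prod -(big_mkord xpredT term) (@big_cat_nat _ _ _ (n.+1 - j)) /=; [|lia|lia].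
  rewrite [X in _ + X]big1_seq ?addr0 // => k; rewrite mem_index_iota => /and3P [_ le_k _].
  by rewrite /term (@bin_small n.+1) ?mulr0 //; lia.
pose diff_term m := (-1) ^+ m * ('C(n.+1, m) * 'C(i - j - 1 + m, n))%:Z.
have diff_window :
    binom_diff n.+1 (i - j - 1) n = \sum_(0 <= k < n.+1 - j) (-1) ^+ n.+1 * term k.
  rewrite /binom_diff -(big_mkord xpredT diff_term) (@big_cat_nat _ _ _ j.+1) /=; [|lia|lia].
  rewrite big1_seq ?add0r => [|m]; last first.
    rewrite mem_index_iota => /and3P [_ _ lt_mj].
    by rewrite /diff_term (@bin_small (i - j - 1 + m) n) ?muln0 ?mulr0 //; lia.
  rewrite -{1}(add0n j.+1) big_addn subSS; apply: eq_bigr => k _; rewrite /diff_term.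
  have -> : (i - j - 1 + (k + j.+1) = i + k)%N by lia.
  have -> : (-1) ^+ (k + j.+1) = (-1) ^+ (n.+1 + (n + k + j)) :> int.
    by apply: (sign_add_double _ _ _ n); lia.
  by rewrite /term addn1 -addnS PoszM exprD; ring.
have := binom_diff_vanish n.+1 (i - j - 1) n (ltnSn n).
rewrite diff_window -mulr_sumr -prod_window => /eqP.
by rewrite mulf_eq0 signr_eq0 => /eqP.
Qed.

(* On and above the diagonal only the term k = n - j survives: C(i+k, n) = 0
   for smaller k and C(n+1, k+j+1) = 0 for larger k. *)
Lemma hankel_prod_upper n i j :
  (j <= n)%N -> (i <= j)%N -> hankel_prod n i j = (i == j)%:R.
Proof.
move=> le_jn le_ij; have lt_k0 : (n - j < n.+1)%N by lia.
rewrite /hankel_prod (bigD1 (Ordinal lt_k0)) //= big1 ?addr0 => [|k]; last first.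
  rewrite -val_eqE /= => neq_k; case: (ltnP k (n - j)) => [lt_k | le_k].
    by rewrite bin_small ?mul0r //; lia.
  by rewrite (@bin_small n.+1) ?mulr0 //; lia.
rewrite subnK // addn1 (binn n.+1) mulr1.
have [-> | neq_ij] := eqVneq i j; last by rewrite bin_small ?mul0r //; lia.
rewrite subnKC // binn mul1r -(sign_add_double _ 0 (n + (n - j) + j) n) //; lia.
Qed.

Lemma hankel_mul_inv n : hankelM n *m hankelMinv n = 1%:M.
Proof.
apply/matrixP => i j; rewrite hankel_prodE mxE.
have le_in : (i <= n)%N by rewrite -ltnS ltn_ord.
have le_jn : (j <= n)%N by rewrite -ltnS ltn_ord.
case: (leqP i j) => [le_ij | lt_ji]; first by rewrite hankel_prod_upper.
by rewrite hankel_prod_lower // -val_eqE /= gtn_eqF.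
Qed.

Lemma invmx_right_inverse (R : comUnitRingType) m (A B : 'M[R]_m) :
  A *m B = 1%:M -> A \in unitmx /\ invmx A = B.
Proof.
move=> AB; have [uA _] := mulmx1_unit AB.
by split=> //; rewrite -[invmx A]mulmx1 -AB mulmxA mulVmx // mul1mx.
Qed.

Theorem lemma3p2 (n : nat) :
  hankelM n \in unitmx /\ invmx (hankelM n) = hankelMinv n.
Proof. exact/invmx_right_inverse/hankel_mul_inv. Qed.
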